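(* Let $(\mathcal A,p_n)$ be a Fréchet algebra and $I$ a closed ideal of $\mathcal A$. Let $\mathcal A=\varprojlim\mathcal A_n$ be an Arens–Michael decomposition of $\mathcal A$ and $I=\varprojlim\overline{I_n}$ the corresponding Arens–Michael decomposition of $I$, where $I_n=\varphi_n(I)$. Then $\mathcal A$ has a locally bounded approximate identity modulo $I$ if and only if each Banach algebra $\mathcal A_n$ has a bounded approximate identity modulo $\overline{I_n}$.
   Context: A Fréchet algebra $(\mathcal A,p_n)$ is a complete topological algebra whose topology is given by a countable increasing family of submultiplicative seminorms. Arens–Michael decomposition: $\mathcal A_n$ is the completion of the normed algebra $\mathcal A/\ker p_n$ with $\|a+\ker p_n\|_n=p_n(a)$, $\varphi_n:\mathcal A\to\mathcal A_n$ the canonical map $a\mapsto a+\ker p_n$, and $\mathcal A$ is identified with the inverse limit of the $\mathcal A_n$ under the natural linking maps; $\overline{I_n}$ is the closure of $\varphi_n(I)$ in $\mathcal A_n$. $\mathcal A$ has a locally bounded approximate identity modulo $I$ if there is a family $\{C_n\}$ of positive reals such that for each finite $F\subseteq\mathcal A\setminus I$, each $n$ and each $\varepsilon>0$ there is $b\in\mathcal A$ with $p_n(b)\le C_n$, $p_n(ab-a)<\varepsilon$, $p_n(ba-a)<\varepsilon$ for all $a\in F$. A Banach algebra $\mathcal B$ has a bounded approximate identity modulo a closed ideal $J$ if there is a bounded net $(u_\alpha)$ with $u_\alpha b\to b$ and $bu_\alpha\to b$ for all $b\in\mathcal B\setminus J$. *)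

From HB Require Import structures.
From mathcomp Require Import all_boot all_order all_algebra.
From mathcomp Require Import all_classical all_reals all_analysis.
From mathcomp Require Export complex.

Set Implicit Arguments.
Unset Strict Implicit.
Unset Printing Implicit Defensive.

Import Order.TTheory GRing.Theory Num.Theory.
Import numFieldNormedType.Exports.
Local Open Scope classical_set_scope.
Local Open Scope ring_scope.

(* Algebras are NOT
   assumed unital: an algebra is a K-module with an explicit bilinear
   associative multiplication. *)

Definition is_algebra_mul (K : numFieldType) (A : lmodType K) (mul : A -> A -> A) : Prop :=
  [/\ (forall a b c : A, mul (a + b) c = mul a c + mul b c),
      (forall a b c : A, mul a (b + c) = mul a b + mul a c),
      (forall (k : K) (a b : A), mul (k *: a) b = k *: mul a b),
      (forall (k : K) (a b : A), mul a (k *: b) = k *: mul a b)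
    & (forall a b c : A, mul a (mul b c) = mul (mul a b) c)].

Definition is_frechet_algebra (K : numFieldType) (A : lmodType K)
    (mul : A -> A -> A) (p : nat -> A -> K) : Prop :=
  [/\ is_algebra_mul mul,
      (forall n a, 0 <= p n a) /\
      (forall n a b, p n (a + b) <= p n a + p n b) /\
      (forall n (k : K) a, p n (k *: a) = `|k| * p n a),
      (forall n a b, p n (mul a b) <= p n a * p n b),
      (forall n a, p n a <= p n.+1 a) /\
      (forall a, (forall n, p n a = 0) -> a = 0)
    &
      (forall u : nat -> A,
        (forall n (eps : K), 0 < eps -> exists N, forall i j,
            (N <= i)%N -> (N <= j)%N -> p n (u i - u j) < eps) ->
        exists l : A, forall n (eps : K), 0 < eps -> exists N, forall i,
            (N <= i)%N -> p n (u i - l) < eps)].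

(** Closedness is
    w.r.t. the topology of the seminorms: every point of the closure
    (every neighbourhood {x | p n (a - x) < eps} meets I) lies in I. *)
Definition is_closed_ideal (K : numFieldType) (A : lmodType K)
    (mul : A -> A -> A) (p : nat -> A -> K) (I : set A) : Prop :=
  [/\ I 0,
      (forall a b, I a -> I b -> I (a + b)),
      (forall (k : K) a, I a -> I (k *: a)),
      (forall a x, I x -> I (mul a x) /\ I (mul x a))
    & (forall a, (forall n (eps : K), 0 < eps -> exists x, I x /\ p n (a - x) < eps) -> I a)].

Definition is_banach_algebra (K : numFieldType) (B : completeNormedModType K)
    (mulB : B -> B -> B) : Prop :=
  is_algebra_mul mulB /\ (forall x y : B, `|mulB x y| <= `|x| * `|y|).

(** Arens–Michael component: (B, phi) is (isometrically isomorphic to) the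
    completion A_n of the normed algebra A / ker p_n with norm
    ||a + ker p_n|| = p_n(a), phi being the canonical map a |-> a + ker p_n. *)
Definition is_AM_component (K : numFieldType) (A : lmodType K)
    (mul : A -> A -> A) (p : nat -> A -> K) (n : nat)
    (B : completeNormedModType K) (mulB : B -> B -> B) (phi : A -> B) : Prop :=
  [/\ is_banach_algebra mulB,
      (forall a b, phi (a + b) = phi a + phi b) /\
      (forall (k : K) a, phi (k *: a) = k *: phi a),
      (forall a b, phi (mul a b) = mulB (phi a) (phi b)),
      (forall a, `|phi a| = p n a)
    & (forall (b : B) (eps : K), 0 < eps -> exists a, `|b - phi a| < eps)].

Definition has_lbai_mod (K : numFieldType) (A : lmodType K)
    (mul : A -> A -> A) (p : nat -> A -> K) (I : set A) : Prop :=
  exists C : nat -> K, (forall n, 0 < C n) /\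
    forall (F : seq A), (forall a, a \in F -> ~ I a) ->
    forall n (eps : K), 0 < eps ->
    exists b : A, p n b <= C n /\
      forall a, a \in F -> p n (mul a b - a) < eps /\ p n (mul b a - a) < eps.

Definition directed_set (D : Type) (le : D -> D -> Prop) : Prop :=
  [/\ inhabited D,
      (forall d, le d d),
      (forall d1 d2 d3, le d1 d2 -> le d2 d3 -> le d1 d3)
    & (forall d1 d2, exists d3, le d1 d3 /\ le d2 d3)].

Definition has_bai_mod (K : numFieldType) (B : completeNormedModType K)
    (mulB : B -> B -> B) (J : set B) : Prop :=
  exists (D : Type) (le : D -> D -> Prop) (u : D -> B) (M : K),
    directed_set le /\ (forall d, `|u d| <= M) /\
    forall b : B, ~ J b -> forall eps : K, 0 < eps ->
      exists d0, forall d, le d0 d ->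
        `|mulB (u d) b - b| < eps /\ `|mulB b (u d) - b| < eps.

From HB Require Import structures.
From mathcomp Require Import all_boot all_order all_algebra.
From mathcomp Require Import all_classical all_reals all_analysis.
From mathcomp Require Import complex.
Import Order.TTheory GRing.Theory Num.Theory.
Import numFieldNormedType.Exports.
Local Open Scope classical_set_scope.
Local Open Scope ring_scope.

(* phi_n maps A isometrically (for p_n) onto a dense subalgebra of A_n.
   Forward: images under phi_n of the local approximate units of A are
   approximate units of A_n on finite subsets of phi_n(A \ I), a set dense
   outside J_n = closure(phi_n(I)); indexed by pairs (finite set, tolerance)
   they form a bounded approximate identity of A_n modulo J_n.
   Backward: closedness of I gives c outside I and a level m at which c is not
   adherent to I, so phi_N(c) lies outside the subgroup J_N for N >= m.  Every
   b in J_N is then the difference of b + c and c, both outside J_N, so a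
   bounded approximate identity modulo J_N is one of A_N; perturbing its
   members into phi_N(A) and using p_n <= p_N for N = max(n, m) gives the
   bounded approximate units of A at level n. *)

Set Implicit Arguments.
Unset Strict Implicit.
Unset Printing Implicit Defensive.

Lemma directed_eventually_all (D : Type) (le : D -> D -> Prop) (X : eqType)
    (P : X -> D -> Prop) (F : seq X) :
  directed_set le ->
  (forall x, x \in F -> exists d0, forall d, le d0 d -> P x d) ->
  exists d0, forall d, le d0 d -> forall x, x \in F -> P x d.
Proof.
case=> [[d00] _ le_trans le_directed]; elim: F => [|x F IHF] PF.
  by exists d00.
have [d1 h1] := IHF (fun y yF => PF y (mem_behead (s := x :: F) yF)).
have [d2 h2] := PF x (mem_head x F).
have [d0 [le10 le20]] := le_directed d1 d2.
exists d0 => d le0 y; rewrite in_cons => /predU1P [->|yF].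
  exact/h2/(le_trans _ _ _ le20).
exact: h1 (le_trans _ _ _ le10 le0) y yF.
Qed.

Lemma seq_image_lift (X Y : eqType) (f : X -> Y) (S : set X) (F : seq Y) :
  (forall y, y \in F -> (f @` S) y) ->
  exists2 G : seq X, F = map f G & forall x, x \in G -> S x.
Proof.
elim: F => [|y F IHF] FS; first by exists [::].
have [G -> GS] := IHF (fun z zF => FS z (mem_behead (s := y :: F) zF)).
have [x Sx <-] := FS y (mem_head y F).
by exists (x :: G) => // z; rewrite in_cons => /predU1P [->|/GS].
Qed.

Lemma exists_pos_le2 (K : numDomainType) (x y : K) :
  0 < x -> 0 < y -> exists z, [/\ 0 < z, z <= x & z <= y].
Proof.
move=> x_gt0 y_gt0.
by case/orP: (real_leVge (gtr0_real x_gt0) (gtr0_real y_gt0)) => le;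
  [exists x | exists y].
Qed.

Lemma exists_small_multiplier (K : numFieldType) (X : eqType) (f : X -> K)
    (e : K) (F : seq X) :
  (forall x, 0 <= f x) -> 0 < e ->
  exists eta, [/\ 0 < eta, eta <= 1 & forall x, x \in F -> f x * eta < e].
Proof.
move=> f_ge0 e_gt0; elim: F => [|x F [eta [eta_gt0 eta_le1 small]]].
  by exists 1; rewrite ltr01.
have fx1_gt0 : 0 < f x + 1 by rewrite ltr_wpDl.
have [eta' [eta'_gt0 le_eta le_e]] :=
  exists_pos_le2 eta_gt0 (divr_gt0 e_gt0 fx1_gt0).
exists eta'; split => //; first exact: le_trans eta_le1.
move=> y; rewrite in_cons => /predU1P [->|yF].
  apply: le_lt_trans (ler_wpM2l (f_ge0 x) le_e) _.
  by rewrite mulrCA gtr_pMr // ltr_pdivrMr // mul1r ltrDl.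
exact: le_lt_trans (ler_wpM2l (f_ge0 y) le_eta) (small y yF).
Qed.

Section NormedClosure.
Variables (K : numFieldType) (V : normedModType K).

Lemma closure_normP (S : set V) (v : V) :
  closure S v <-> forall eps, 0 < eps -> exists2 w, S w & `|v - w| < eps.
Proof.
split=> [clSv eps eps_gt0 | near_v U /nbhs_ballP [r r_gt0 rU]].
  have [w [Sw vw]] := clSv _ (nbhsx_ballx v eps eps_gt0).
  by exists w => //; move: vw; rewrite -ball_normE.
have [w Sw vw] := near_v r r_gt0.
by exists w; split; last by apply: rU; rewrite -ball_normE.
Qed.

Lemma closure_subr_closed (S : set V) :
  (forall v w, S v -> S w -> S (v - w)) ->
  forall v w, closure S v -> closure S w -> closure S (v - w).
Proof.
move=> subS v w /closure_normP clv /closure_normP clw.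
apply/closure_normP => eps eps_gt0.
have eps2_gt0 : 0 < eps / 2 by rewrite divr_gt0.
have [v' Sv' vv'] := clv _ eps2_gt0; have [w' Sw' ww'] := clw _ eps2_gt0.
exists (v' - w'); first exact: subS.
have -> : v - w - (v' - w') = (v - v') - (w - w').
  by rewrite !opprB addrACA [RHS]addrACA [- v' + _]addrC.
by rewrite (splitr eps); apply: le_lt_trans (ler_normB _ _) (ltrD vv' ww').
Qed.

Lemma dense_range_outside_closure (X : Type) (f : X -> V) (S : set X) :
  (forall w eps, 0 < eps -> exists x, `|w - f x| < eps) ->
  forall v, ~ closure (f @` S) v ->
  forall r, 0 < r -> exists2 w, (f @` ~` S) w & `|v - w| < r.
Proof.
move=> f_dense v /closure_normP; rewrite -existsNP.
move=> -[r0 /not_implyP [r0_gt0 far_v]] r r_gt0.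
have [s [s_gt0 s_le_r0 s_le_r]] := exists_pos_le2 r0_gt0 r_gt0.
have [x vx] := f_dense v s s_gt0.
exists (f x); last exact: lt_le_trans vx s_le_r.
exists x => // Sx; apply: far_v.
by exists (f x); [exists x | exact: lt_le_trans vx s_le_r0].
Qed.

End NormedClosure.

Definition approx_units_on (K : numDomainType) (X : zmodType)
    (mul : X -> X -> X) (nu : X -> K) (S : set X) (M : K) : Prop :=
  forall F : seq X, (forall a, a \in F -> S a) -> forall eps, 0 < eps ->
  exists u, nu u <= M /\
    forall a, a \in F -> nu (mul a u - a) < eps /\ nu (mul u a - a) < eps.

Lemma approx_units_onW (K : numDomainType) (X : zmodType) (mul : X -> X -> X)
    (nu nu' : X -> K) (S S' : set X) (M : K) :
  S' `<=` S -> (forall x, nu x <= nu' x) ->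
  approx_units_on mul nu' S M -> approx_units_on mul nu S' M.
Proof.
move=> sub_S le_nu approx F FS' eps eps_gt0.
have [u [u_le approx_u]] :=
  approx F (fun a aF => sub_S a (FS' a aF)) eps eps_gt0.
exists u; split=> [|a aF]; first exact: le_trans u_le.
by have [l r] := approx_u a aF; split; apply: le_lt_trans (le_nu _) _.
Qed.

Lemma has_lbai_modP (K : numFieldType) (A : lmodType K) (mul : A -> A -> A)
    (p : nat -> A -> K) (I : set A) :
  has_lbai_mod mul p I <->
  exists C : nat -> K, (forall n, 0 < C n) /\
    forall n, approx_units_on mul (p n) (~` I) (C n).
Proof.
by split=> -[C [C_gt0 approx]]; exists C; split=> // n F FI; apply: approx.
Qed.

Section AlgebraMul.
Variables (K : numFieldType) (X : lmodType K) (mul : X -> X -> X).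
Hypothesis mul_alg : is_algebra_mul mul.

Lemma alg_mulrBr (x y z : X) : mul x (y - z) = mul x y - mul x z.
Proof.
by case: mul_alg => _ mulDr _ mulZr _; rewrite mulDr -scaleN1r mulZr scaleN1r.
Qed.

Lemma alg_mulrBl (x y z : X) : mul (y - z) x = mul y x - mul z x.
Proof.
by case: mul_alg => mulDl _ mulZl _ _; rewrite mulDl -scaleN1r mulZl scaleN1r.
Qed.

Lemma alg_defectBl (x y u : X) :
  mul u (x - y) - (x - y) = (mul u x - x) - (mul u y - y).
Proof. by rewrite alg_mulrBr !opprB addrACA [RHS]addrACA [- x + _]addrC. Qed.

Lemma alg_defectBr (x y u : X) :
  mul (x - y) u - (x - y) = (mul x u - x) - (mul y u - y).
Proof. by rewrite alg_mulrBl !opprB addrACA [RHS]addrACA [- x + _]addrC. Qed.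

End AlgebraMul.

Definition refines (X : eqType) (K : numDomainType)
    (d1 d2 : seq X * {e : K | 0 < e}) : Prop :=
  {subset d1.1 <= d2.1} /\ sval d2.2 <= sval d1.2.

Lemma refines_directed (X : eqType) (K : numDomainType) :
  directed_set (@refines X K).
Proof.
split=> [|d|d1 d2 d3 [s12 e12] [s23 e23]|[F1 [e1 e1_gt0]] [F2 [e2 e2_gt0]]].
- by constructor; exact: ([::], exist _ 1 ltr01).
- by split.
- by split=> [x /s12 /s23|]; last exact: le_trans e23 e12.
- have [e [e_gt0 le_e1 le_e2]] := exists_pos_le2 e1_gt0 e2_gt0.
  by exists (F1 ++ F2, exist _ e e_gt0); split; split=> // x xF;
    rewrite mem_cat xF ?orbT.
Qed.

Section BanachAlgebra.
Variables (K : numFieldType) (B : completeNormedModType K) (mulB : B -> B -> B).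
Hypothesis mulB_alg : is_algebra_mul mulB.
Hypothesis mulB_submult : forall x y, `|mulB x y| <= `|x| * `|y|.

Lemma norm_mulrBr_le (x y z : B) : `|mulB x y - mulB x z| <= `|x| * `|y - z|.
Proof. by rewrite -(alg_mulrBr mulB_alg); exact: mulB_submult. Qed.

Lemma norm_mulrBl_le (x y z : B) : `|mulB y x - mulB z x| <= `|y - z| * `|x|.
Proof. by rewrite -(alg_mulrBl mulB_alg); exact: mulB_submult. Qed.

Lemma norm_defect_elt_perturbl (u b t : B) :
  `|mulB u b - b| <= `|u| * `|b - t| + `|mulB u t - t| + `|b - t|.
Proof.
have -> : mulB u b - b = (mulB u b - mulB u t) + (mulB u t - t) + (t - b).
  by rewrite !addrA !subrK.
rewrite [X in _ <= _ + X]distrC.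
do 2![apply: le_trans (ler_normD _ _) _; rewrite lerD2r].
exact: norm_mulrBr_le.
Qed.

Lemma norm_defect_elt_perturbr (u b t : B) :
  `|mulB b u - b| <= `|u| * `|b - t| + `|mulB t u - t| + `|b - t|.
Proof.
have -> : mulB b u - b = (mulB b u - mulB t u) + (mulB t u - t) + (t - b).
  by rewrite !addrA !subrK.
rewrite [X in _ <= _ + X]distrC mulrC.
do 2![apply: le_trans (ler_normD _ _) _; rewrite lerD2r].
exact: norm_mulrBl_le.
Qed.

Lemma norm_defect_unit_perturbl (a v w : B) :
  `|mulB w a - a| <= `|a| * `|v - w| + `|mulB v a - a|.
Proof.
have -> : mulB w a - a = (mulB w a - mulB v a) + (mulB v a - a).
  by rewrite addrA subrK.
apply: le_trans (ler_normD _ _) _.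
by rewrite lerD2r distrC mulrC norm_mulrBl_le.
Qed.

Lemma norm_defect_unit_perturbr (a v w : B) :
  `|mulB a w - a| <= `|a| * `|v - w| + `|mulB a v - a|.
Proof.
have -> : mulB a w - a = (mulB a w - mulB a v) + (mulB a v - a).
  by rewrite addrA subrK.
apply: le_trans (ler_normD _ _) _.
by rewrite lerD2r distrC norm_mulrBr_le.
Qed.

Lemma has_bai_mod_of_approx_units (J T : set B) (M : K) :
  approx_units_on mulB Num.norm T M ->
  (forall b, ~ J b -> forall r, 0 < r -> exists2 t, T t & `|b - t| < r) ->
  has_bai_mod mulB J.
Proof.
move=> approx T_dense.
have M_ge0 : 0 <= M.
  by have [|u [u_le _]] := approx [::] _ 1 ltr01; last exact: le_trans u_le.
pose T_part (F : seq B) := [seq t <- F | `[< T t >]].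
have /choice [u u_spec] : forall d : seq B * {e : K | 0 < e}, exists v,
    `|v| <= M /\ forall t, t \in T_part d.1 ->
      `|mulB t v - t| < sval d.2 /\ `|mulB v t - t| < sval d.2.
  move=> [F [eps eps_gt0]]; apply: (approx _ _ _ eps_gt0) => t.
  by rewrite mem_filter => /andP [/asboolP].
exists _, (@refines B K), u, M.
split; [exact: refines_directed | split=> [d|b Jb eps eps_gt0]].
  exact: (u_spec d).1.
have eps2_gt0 : 0 < eps / 2 by rewrite divr_gt0.
have M1_gt0 : 0 < M + 1 by rewrite ltr_wpDl.
have [t Tt bt] := T_dense b Jb _ (divr_gt0 eps2_gt0 M1_gt0).
exists ([:: t], exist _ (eps / 2) eps2_gt0) => d [/= t_d le_eps].
have tT : t \in T_part d.1.
  by rewrite mem_filter t_d ?mem_head // andbT; apply/asboolP.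
have [u_le /(_ t tT) [ut_r ut_l]] := u_spec d.
have small x : x < sval d.2 -> `|u d| * `|b - t| + x + `|b - t| < eps.
  move=> x_lt; rewrite addrAC -[X in _ + X + _]mul1r -mulrDl (splitr eps) addrC.
  apply: ltr_leD; first exact: lt_le_trans le_eps.
  have u1_ge0 : 0 <= `|u d| + 1 by rewrite addr_ge0.
  apply: le_trans (ler_pM u1_ge0 (normr_ge0 _) (lerD u_le (lexx 1)) (ltW bt)) _.
  by rewrite mulrC divfK // gt_eqF.
split; apply: le_lt_trans (small _ _).
- exact: norm_defect_elt_perturbl.
- exact: ut_l.
- exact: norm_defect_elt_perturbr.
- exact: ut_r.
Qed.

Lemma approx_units_of_bai_mod (J : set B) (c : B) :
  (forall x y, J x -> J y -> J (x - y)) -> ~ J c -> has_bai_mod mulB J ->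
  exists M, 0 <= M /\ approx_units_on mulB Num.norm setT M.
Proof.
move=> subJ Jc [D [le [u [M [le_directed [u_le u_cvg]]]]]].
have [[d00] le_refl _ _] := le_directed.
exists M; split; first exact: le_trans (u_le d00).
have u_cvg' b eps : ~ J b -> 0 < eps -> exists d0, forall d, le d0 d ->
    `|mulB b (u d) - b| < eps /\ `|mulB (u d) b - b| < eps.
  by move=> Jb /(u_cvg b Jb) [d0 d0_cvg]; exists d0 => d /d0_cvg [].
have u_cvg_all b eps : 0 < eps -> exists d0, forall d, le d0 d ->
    `|mulB b (u d) - b| < eps /\ `|mulB (u d) b - b| < eps.
  move=> eps_gt0; have [Jb|Jb] := pselect (J b); last exact: u_cvg'.
  have Jbc : ~ J (b + c) by move=> /subJ /(_ Jb); rewrite addrC addKr.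
  have eps2_gt0 : 0 < eps / 2 by rewrite divr_gt0.
  have bc_notin x : x \in [:: b + c; c] -> ~ J x.
    by rewrite !inE => /orP [] /eqP ->.
  have [d0 d0_cvg] := directed_eventually_all le_directed
    (fun x xbc => u_cvg' x _ (bc_notin x xbc) eps2_gt0).
  exists d0 => d /d0_cvg bc_cvg.
  have [bc_r bc_l] := bc_cvg (b + c) (mem_head _ _).
  have [|c_r c_l] := bc_cvg c; first by rewrite !inE eqxx orbT.
  rewrite -[b](addrK c) alg_defectBl // alg_defectBr // (splitr eps).
  by split; apply: le_lt_trans (ler_normB _ _) (ltrD _ _).
move=> F _ eps eps_gt0.
have [d0 d0_cvg] := directed_eventually_all (F := F) le_directed
  (fun b _ => u_cvg_all b eps eps_gt0).
by exists (u d0); split; [exact: u_le | exact: d0_cvg (le_refl d0)].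
Qed.

End BanachAlgebra.

Definition adherent (K : numDomainType) (X : zmodType) (nu : X -> K)
    (S : set X) (a : X) : Prop :=
  forall eps, 0 < eps -> exists x, S x /\ nu (a - x) < eps.

Lemma adherentW (K : numDomainType) (X : zmodType) (nu nu' : X -> K)
    (S : set X) (a : X) :
  (forall x, nu x <= nu' x) -> adherent nu' S a -> adherent nu S a.
Proof.
move=> le_nu near_a eps /near_a [x [Sx ax]].
by exists x; split; last exact: le_lt_trans (le_nu _) ax.
Qed.

Lemma frechet_seminorm_mono (K : numFieldType) (A : lmodType K)
    (mul : A -> A -> A) (p : nat -> A -> K) (m N : nat) (a : A) :
  is_frechet_algebra mul p -> (m <= N)%N -> p m a <= p N a.
Proof.
case=> _ _ _ [p_le_succ _] _ le_mN.
apply: (homo_leq (f := p^~ a) (r := <=%O) lexx _ (p_le_succ ^~ a) le_mN).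
exact: le_trans.
Qed.

Lemma frechet_seminorm0 (K : numFieldType) (A : lmodType K)
    (mul : A -> A -> A) (p : nat -> A -> K) (n : nat) :
  is_frechet_algebra mul p -> p n 0 = 0.
Proof. by case=> _ [_ [_ pZ]] _ _ _; rewrite -(scale0r 0) pZ normr0 mul0r. Qed.

Lemma closed_ideal_subr (K : numFieldType) (A : lmodType K)
    (mul : A -> A -> A) (p : nat -> A -> K) (I : set A) :
  is_closed_ideal mul p I -> forall x y, I x -> I y -> I (x - y).
Proof. by case=> _ ID IZ _ _ x y Ix Iy; rewrite -scaleN1r; apply/ID/IZ. Qed.

Lemma closed_ideal_far_level (K : numFieldType) (A : lmodType K)
    (mul : A -> A -> A) (p : nat -> A -> K) (I : set A) (c : A) :
  is_closed_ideal mul p I -> ~ I c -> exists m, ~ adherent (p m) I c.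
Proof. by case=> _ _ _ _ I_closed Ic; apply/existsNP => /I_closed. Qed.

Section ArensMichaelComponent.
Variables (K : numFieldType) (A : lmodType K) (mul : A -> A -> A).
Variables (p : nat -> A -> K) (n : nat).
Variables (B : completeNormedModType K) (mulB : B -> B -> B) (phi : A -> B).
Hypothesis AM : is_AM_component mul p n mulB phi.

Lemma AM_phiB (a b : A) : phi (a - b) = phi a - phi b.
Proof.
by case: AM => _ [phiD phiZ] _ _ _; rewrite phiD -scaleN1r phiZ scaleN1r.
Qed.

Lemma AM_phiM (a b : A) : phi (mul a b) = mulB (phi a) (phi b).
Proof. by case: AM. Qed.

Lemma AM_norm (a : A) : `|phi a| = p n a.
Proof. by case: AM. Qed.

Lemma approx_units_on_image (S : set A) (M : K) :
  approx_units_on mul (p n) S M -> approx_units_on mulB Num.norm (phi @` S) M.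
Proof.
move=> approx F FS eps eps_gt0.
have [G -> GS] := seq_image_lift FS.
have [u [u_le approx_u]] := approx G GS eps eps_gt0.
exists (phi u); split=> [|_ /mapP [a aG ->]]; first by rewrite AM_norm.
by rewrite -!AM_phiM -!AM_phiB !AM_norm; exact: approx_u.
Qed.

Lemma approx_units_on_preimage (S : set A) (M : K) :
  approx_units_on mulB Num.norm (phi @` S) M ->
  approx_units_on mul (p n) S (M + 1).
Proof.
have [[mulB_alg mulB_submult] _ _ _ phi_dense] := AM.
move=> approx F FS eps eps_gt0.
have eps2_gt0 : 0 < eps / 2 by rewrite divr_gt0.
have [|v [v_le approx_v]] := approx (map phi F) _ _ eps2_gt0.
  by move=> _ /mapP [a aF ->]; exists a; first exact: FS.
have p_ge0 a : 0 <= p n a by rewrite -AM_norm.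
have [eta [eta_gt0 eta_le1 small]] := exists_small_multiplier F p_ge0 eps2_gt0.
have [b vb] := phi_dense v eta eta_gt0.
exists b; split=> [|a aF].
  rewrite -AM_norm -[phi b](subKr v).
  exact: le_trans (ler_normB _ _) (lerD v_le (le_trans (ltW vb) eta_le1)).
have [va_r va_l] := approx_v (phi a) (map_f phi aF).
have small_a : `|phi a| * `|v - phi b| < eps / 2.
  rewrite AM_norm; apply: le_lt_trans (small a aF).
  by rewrite ler_wpM2l // ltW.
rewrite -!AM_norm !AM_phiB !AM_phiM (splitr eps); split.
- apply: le_lt_trans (ltrD small_a va_r).
  exact: norm_defect_unit_perturbr mulB_alg mulB_submult _ v _.
- apply: le_lt_trans (ltrD small_a va_l).
  exact: norm_defect_unit_perturbl mulB_alg mulB_submult _ v _.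
Qed.

Lemma image_subr_closed (S : set A) :
  (forall x y, S x -> S y -> S (x - y)) ->
  forall v w, (phi @` S) v -> (phi @` S) w -> (phi @` S) (v - w).
Proof.
move=> subS _ _ [x Sx <-] [y Sy <-].
by exists (x - y); [exact: subS | exact: AM_phiB].
Qed.

Lemma closure_image_adherent (S : set A) (a : A) :
  closure (phi @` S) (phi a) -> adherent (p n) S a.
Proof.
move=> /closure_normP near_a eps /near_a [_ [x Sx <-] ax].
by exists x; rewrite -AM_norm AM_phiB.
Qed.

Lemma AM_bai_mod_of_approx_units (I : set A) (C : K) :
  approx_units_on mul (p n) (~` I) C -> has_bai_mod mulB (closure (phi @` I)).
Proof.
have [[mulB_alg mulB_submult] _ _ _ phi_dense] := AM.
move=> /approx_units_on_image approxB.
apply: (has_bai_mod_of_approx_units mulB_alg mulB_submult approxB).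
exact: dense_range_outside_closure phi_dense.
Qed.

Lemma approx_units_of_AM_bai_mod (I : set A) (c : A) (k m : nat) :
  is_frechet_algebra mul p -> is_closed_ideal mul p I ->
  (k <= n)%N -> (m <= n)%N -> ~ adherent (p m) I c ->
  has_bai_mod mulB (closure (phi @` I)) ->
  exists M, 0 < M /\ approx_units_on mul (p k) (~` I) M.
Proof.
move=> frechet ideal le_kn le_mn c_far bai; have [[mulB_alg _] _ _ _ _] := AM.
have phic_far : ~ closure (phi @` I) (phi c).
  move=> /closure_image_adherent near_c; apply/c_far/(adherentW _ near_c) => x.
  exact: frechet_seminorm_mono frechet le_mn.
have phiI_subr := image_subr_closed (closed_ideal_subr ideal).
have [M [M_ge0 approxB]] := approx_units_of_bai_mod mulB_alg
  (closure_subr_closed phiI_subr) phic_far bai.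
exists (M + 1); split; first by rewrite ltr_wpDl.
apply: (approx_units_onW (S := setT)) (approx_units_on_preimage _) => // [x|].
  exact: frechet_seminorm_mono frechet le_kn.
exact: approx_units_onW approxB.
Qed.

End ArensMichaelComponent.

Theorem corollary3p9 (R : realType) (A : lmodType R[i])
    (mul : A -> A -> A) (p : nat -> A -> R[i]) (I : set A)
    (B : nat -> completeNormedModType R[i])
    (mulB : forall n, B n -> B n -> B n)
    (phi : forall n, A -> B n) :
  is_frechet_algebra mul p ->
  is_closed_ideal mul p I ->
  (forall n, is_AM_component mul p n (mulB n) (phi n)) ->
  (has_lbai_mod mul p I <->
   forall n, has_bai_mod (mulB n) (closure (phi n @` I))).
Proof.
move=> frechet ideal AM; rewrite has_lbai_modP; split.
  by case=> C [_ approx] n; exact: AM_bai_mod_of_approx_units (approx n).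
move=> bai; have [[c Ic]|I_full] := pselect (exists c, ~ I c); last first.
  exists (fun=> 1); split=> // n [_ eps _|a F /(_ a (mem_head _ _)) Ia].
    by exists 0; rewrite (frechet_seminorm0 _ frechet).
  by case: I_full; exists a.
have [m c_far] := closed_ideal_far_level ideal Ic.
have /choice [C approxC] n :
    exists M, 0 < M /\ approx_units_on mul (p n) (~` I) M.
  exact (approx_units_of_AM_bai_mod (AM _) frechet ideal
    (leq_maxl n m) (leq_maxr n m) c_far (bai _)).
by exists C; split=> n; case: (approxC n).
Qed.
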